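(* Let $X\in\mathbb{R}^{n\times d}$, $y\in\mathbb{R}^n$, and let $g:\mathbb{R}^d\to(-\infty,\infty]$ be a proper lower semicontinuous convex function with $g(k\beta)=kg(\beta)$ for all $k\ge0$, $\beta\in\mathbb{R}^d$, and with some $\beta\in\mathrm{relint}(\mathrm{dom}(g))$. For $\lambda>0$ consider the problem $\min_\beta \frac12\|\frac1\lambda y-X\beta\|_2^2+g(\beta)$, assumed to attain its minimum, with Fenchel–Rockafellar dual $\max_\theta -\frac12\|\theta\|_2^2+\frac1\lambda y^\top\theta-g^\star(X^\top\theta)$; let $\hat\beta^{(\lambda)}$ and $\hat\theta^{(\lambda)}$ be primal and dual optimal points, respectively. Fix $\lambda_0>0$ and define \[ \mathcal{R}^{\mathrm{Sasvi}}(\lambda_0)=\Big\{\theta\ \Big|\ 0\ge(y-\theta)^\top(\hat\theta^{(\lambda_0)}-\theta)\ \land\ 0\ge\big(\tfrac1{\lambda_0}y-\hat\theta^{(\lambda_0)}\big)^\top(\theta-\hat\theta^{(\lambda_0)})\Big\}, \] \[ \mathcal{R}^{\mathrm{DS}}(\hat\beta^{(\lambda_0)},\hat\theta^{(\lambda_0)})=\Big\{\theta\ \Big|\ \Big\|\theta-\tfrac12(\hat\theta^{(\lambda_0)}+y)\Big\|_2^2\le\tfrac14\|\hat\theta^{(\lambda_0)}-y\|_2^2\ \land\ 0\le g(\hat\beta^{(\lambda_0)})-\theta^\top X\hat\beta^{(\lambda_0)}\Big\}. \] Then $\mathcal{R}^{\mathrm{Sasvi}}(\lambda_0)=\mathc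al{R}^{\mathrm{DS}}(\hat\beta^{(\lambda_0)},\hat\theta^{(\lambda_0)})$.
   Context: $g^\star(v)=\sup_\beta v^\top\beta-g(\beta)$ is the Fenchel conjugate; $\mathrm{dom}(g)=\{\beta:|g(\beta)|<\infty\}$; $\mathrm{relint}$ is relative interior. Both sets are regions intended to contain the dual optimal point $\hat\theta^{(1)}$ of the $\lambda=1$ problem. *)

From HB Require Import structures.
From mathcomp Require Import all_boot all_order all_algebra.
From mathcomp Require Import all_classical all_reals all_analysis.
Set Implicit Arguments. Unset Strict Implicit. Unset Printing Implicit Defensive.
Import Order.TTheory GRing.Theory Num.Theory.
Import numFieldNormedType.Exports.
Local Open Scope classical_set_scope.
Local Open Scope ring_scope.

Section Defs.
Variable R : realType.

Definition dotv (m : nat) (u v : 'cV[R]_m) : R := (u^T *m v) 0 0.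
Definition sqnorm (m : nat) (u : 'cV[R]_m) : R := dotv u u.

Definition edom (d : nat) (g : 'cV[R]_d -> \bar R) : set 'cV[R]_d :=
  [set b | g b \is a fin_num].

Definition aff_hull (d : nat) (S : set 'cV[R]_d) : set 'cV[R]_d :=
  [set x | exists (k : nat) (p : 'I_k -> 'cV[R]_d) (w : 'I_k -> R),
     (forall i, S (p i)) /\ \sum_(i < k) w i = 1 /\
     x = \sum_(i < k) w i *: p i].

Definition relint (d : nat) (S : set 'cV[R]_d) : set 'cV[R]_d :=
  [set x | S x /\ exists e : R, 0 < e /\
     forall z, aff_hull S z -> sqnorm (z - x) < e ^+ 2 -> S z].

Definition proper_fun (d : nat) (g : 'cV[R]_d -> \bar R) : Prop :=
  (forall b, g b != -oo%E) /\ (exists b, g b != +oo%E).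

Definition convex_efun (d : nat) (g : 'cV[R]_d -> \bar R) : Prop :=
  forall (b1 b2 : 'cV[R]_d) (t : R), 0 < t < 1 ->
    let b := (t *: b1 + (1 - t) *: b2)%R in
    (g b <= t%:E * g b1 + (1 - t)%:E * g b2)%E.

Definition fconj (d : nat) (g : 'cV[R]_d -> \bar R) (v : 'cV[R]_d) : \bar R :=
  ereal_sup [set ((dotv v b)%:E - g b)%E | b in [set: 'cV[R]_d]].

Definition primal_obj (n d : nat) (X : 'M[R]_(n, d)) (y : 'cV[R]_n)
  (g : 'cV[R]_d -> \bar R) (lam : R) (b : 'cV[R]_d) : \bar R :=
  ((2^-1 * sqnorm (lam^-1 *: y - X *m b))%:E + g b)%E.

Definition dual_obj (n d : nat) (X : 'M[R]_(n, d)) (y : 'cV[R]_n)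
  (g : 'cV[R]_d -> \bar R) (lam : R) (th : 'cV[R]_n) : \bar R :=
  ((- (2^-1 * sqnorm th) + lam^-1 * dotv y th)%:E - fconj g (X^T *m th))%E.

Definition R_Sasvi (n : nat) (y : 'cV[R]_n) (lam0 : R) (thhat : 'cV[R]_n)
  : set 'cV[R]_n :=
  [set th | dotv (y - th) (thhat - th) <= 0 /\
            dotv (lam0^-1 *: y - thhat) (th - thhat) <= 0].

Definition R_DS (n d : nat) (X : 'M[R]_(n, d)) (y : 'cV[R]_n)
  (g : 'cV[R]_d -> \bar R) (bhat : 'cV[R]_d) (thhat : 'cV[R]_n)
  : set 'cV[R]_n :=
  [set th | sqnorm (th - 2^-1 *: (thhat + y)) <= 4^-1 * sqnorm (thhat - y) /\
            (0 <= g bhat - (dotv th (X *m bhat))%:E)%E].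

End Defs.

From HB Require Import structures.
From mathcomp Require Import all_boot all_order all_algebra.
From mathcomp Require Import all_classical all_reals all_analysis.
From mathcomp Require Import ring lra.
Set Implicit Arguments. Unset Strict Implicit. Unset Printing Implicit Defensive.
Import Order.TTheory GRing.Theory Num.Theory.
Import numFieldNormedType.Exports.
Local Open Scope classical_set_scope.
Local Open Scope ring_scope.

(* With r := y/lam0 - X bhat the primal residual, optimality of bhat gives the
   variational inequality <r, X (c - bhat)> <= g c - g bhat, and positive
   homogeneity of g turns it into g bhat = <r, X bhat> and <r, X c> <= g c for
   all c, i.e. g^*(X^T r) <= 0.  The dual objective is then at least its
   concave quadratic minorant at r and at most the same quadratic at any
   other point, so the strictly concave dual forces thhat = r.  Once
   y/lam0 - thhat = X bhat, the two descriptions of each constraint coincide: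
   the first by the identity <y - th, a - th> = |th - (a+y)/2|^2 - |a - y|^2/4,
   the second because g bhat = <thhat, X bhat>. *)

Section Dot.
Variables (R : realType) (m : nat).
Implicit Types (u v w : 'cV[R]_m) (k : R).

Lemma dotvC u v : dotv u v = dotv v u.
Proof. by rewrite /dotv -[u^T *m v]trmxK trmx_mul trmxK mxE. Qed.

Lemma dotvDr u v w : dotv u (v + w) = dotv u v + dotv u w.
Proof. by rewrite /dotv mulmxDr mxE. Qed.

Lemma dotvNr u v : dotv u (- v) = - dotv u v.
Proof. by rewrite /dotv mulmxN mxE. Qed.

Lemma dotvBr u v w : dotv u (v - w) = dotv u v - dotv u w.
Proof. by rewrite dotvDr dotvNr. Qed.

Lemma dotvZr k u v : dotv u (k *: v) = k * dotv u v.
Proof. by rewrite /dotv -scalemxAr mxE. Qed.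

Lemma dotvBl u v w : dotv (v - w) u = dotv v u - dotv w u.
Proof. by rewrite dotvC dotvBr !(dotvC u). Qed.

Lemma dotvZl k u v : dotv (k *: u) v = k * dotv u v.
Proof. by rewrite dotvC dotvZr dotvC. Qed.

Lemma dotvE u v : dotv u v = \sum_i u i 0 * v i 0.
Proof. by rewrite /dotv mxE; apply: eq_bigr => i _; rewrite mxE. Qed.

Lemma sqnorm_ge0 u : 0 <= sqnorm u.
Proof. by rewrite /sqnorm dotvE; apply: sumr_ge0 => i _; rewrite -expr2 sqr_ge0. Qed.

Lemma sqnorm_le0 u : sqnorm u <= 0 -> u = 0.
Proof.
move=> u_le0; have : sqnorm u = 0 by apply/eqP; rewrite eq_le u_le0 sqnorm_ge0.
rewrite /sqnorm dotvE => /psumr_eq0P sum0; apply/matrixP => i j.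
rewrite (ord1 j) mxE; apply/eqP; rewrite -sqrf_eq0 expr2 sum0 // => k _.
by rewrite -expr2 sqr_ge0.
Qed.

Lemma sqnormBZ k u v :
  sqnorm (u - k *: v) = sqnorm u - 2 * k * dotv u v + k ^+ 2 * sqnorm v.
Proof. by rewrite /sqnorm !dotvBl !dotvBr !dotvZl !dotvZr (dotvC v u); ring. Qed.

Lemma dotvB_half_sqnorm u v :
  dotv u v - 2^-1 * sqnorm v = 2^-1 * (sqnorm u - sqnorm (v - u)).
Proof. by rewrite /sqnorm !dotvBl !dotvBr (dotvC v u); field. Qed.

Lemma dotv_diameter u v w :
  dotv (u - w) (v - w) = sqnorm (w - 2^-1 *: (v + u)) - 4^-1 * sqnorm (v - u).
Proof.
rewrite /sqnorm !dotvE mulr_sumr -sumrB; apply: eq_bigr => i _.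
by rewrite !mxE /=; field.
Qed.

End Dot.

Lemma dotv_trmx (R : realType) (n d : nat) (X : 'M[R]_(n, d)) u v :
  dotv (X^T *m u) v = dotv u (X *m v).
Proof. by rewrite /dotv trmx_mul trmxK mulmxA. Qed.

Lemma le0_of_le_small_multiples (R : realFieldType) (a b : R) :
  (forall s, 0 < s < 1 -> a <= s * b) -> a <= 0.
Proof.
move=> le_ab; rewrite leNgt; apply/negP => a_gt0.
have nb_ge0 := normr_ge0 b.
have den_gt0 : 0 < a + `|b| + 1 by lra.
set s := a / (a + `|b| + 1).
have s01 : 0 < s < 1.
  by rewrite divr_gt0 //= ltr_pdivrMr // mul1r; lra.
have sb_le : s * b <= s * `|b| by rewrite ler_pM2l ?ler_norm //; case/andP: s01.
have : s * `|b| < a by rewrite /s mulrC mulrA ltr_pdivrMr //; nra.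
by have := le_ab s s01; lra.
Qed.

Section DualOfPenalizedLeastSquares.
Variables (R : realType) (n d : nat) (X : 'M[R]_(n, d)) (y : 'cV[R]_n).
Variables (g : 'cV[R]_d -> \bar R) (lam : R) (bhat : 'cV[R]_d) (G : R).
Hypothesis gbhat : g bhat = G%:E.

Let resid := lam^-1 *: y - X *m bhat.

Lemma fconj_ge_at (v : 'cV[R]_d) : ((dotv v bhat - G)%:E <= fconj g v)%E.
Proof. by rewrite EFinB -gbhat; apply: ereal_sup_ubound; exists bhat. Qed.

Lemma dual_obj_le_quadratic (th : 'cV[R]_n) :
  (dual_obj X y g lam th <=
   (2^-1 * (sqnorm resid - sqnorm (th - resid)) + G)%:E)%E.
Proof.
rewrite /dual_obj -dotvB_half_sqnorm.
apply: le_trans (leeB (lexx _) (fconj_ge_at (X^T *m th))) _.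
rewrite -EFinB lee_fin dotv_trmx /resid dotvBl dotvZl (dotvC th); lra.
Qed.

Section Optimality.
Hypothesis g_convex : convex_efun g.
Hypothesis bhat_opt :
  forall b, (primal_obj X y g lam bhat <= primal_obj X y g lam b)%E.

Lemma primal_opt_variational (c : 'cV[R]_d) (r : R) :
  g c = r%:E -> dotv resid (X *m (c - bhat)) <= r - G.
Proof.
move=> gc; rewrite -subr_le0; set z := X *m (c - bhat).
apply: (@le0_of_le_small_multiples _ _ (sqnorm z / 2)) => s s01.
have seg : s *: c + (1 - s) *: bhat = bhat + s *: (c - bhat).
  by rewrite scalerBl scale1r scalerBr addrCA.
have resid_seg : lam^-1 *: y - X *m (bhat + s *: (c - bhat)) = resid - s *: z.
  by rewrite mulmxDr -scalemxAr opprD addrA.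
have g_seg := g_convex c bhat s01; rewrite /= seg gc gbhat in g_seg.
have := le_trans (bhat_opt _) (leeD2l _ g_seg).
rewrite /primal_obj resid_seg gbhat -!EFinM -!EFinD lee_fin sqnormBZ -/resid.
have := sqnorm_ge0 z; case/andP: s01 => s_gt0 s_lt1; nra.
Qed.

Hypothesis g_homog :
  forall (k : R) (b : 'cV[R]_d), 0 <= k -> g (k *: b) = (k%:E * g b)%E.

Lemma homog_fun0 : g 0 = 0%E.
Proof. by have := g_homog 0 (lexx 0); rewrite scale0r mul0e. Qed.

Lemma opt_value_dotv : G = dotv resid (X *m bhat).
Proof.
have at0 := primal_opt_variational homog_fun0.
have g2 : g (2 *: bhat) = (2 * G)%:E by rewrite g_homog // gbhat.
have at2 := primal_opt_variational g2.
rewrite sub0r mulmxN dotvNr in at0.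
rewrite scaler_nat mulr2n addrK in at2.
lra.
Qed.

Hypothesis g_proper : proper_fun g.

Lemma fconj_resid_le0 : (fconj g (X^T *m resid) <= 0)%E.
Proof.
apply: ge_ereal_sup => _ [c _ <-]; rewrite dotv_trmx.
case gc: (g c) => [r| |]; last by move: (g_proper.1 c); rewrite gc.
- have := primal_opt_variational gc.
  rewrite mulmxBr dotvBr -opt_value_dotv -EFinB lee_fin; lra.
- by rewrite leNye.
Qed.

Lemma dual_obj_resid_ge :
  ((2^-1 * sqnorm resid + G)%:E <= dual_obj X y g lam resid)%E.
Proof.
rewrite /dual_obj; apply: le_trans (leeB (lexx _) fconj_resid_le0); rewrite sube0.
have residD : lam^-1 *: y = resid + X *m bhat by rewrite /resid subrK.
rewrite lee_fin opt_value_dotv -[lam^-1 * _]dotvZl residD (dotvC _ resid).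
by rewrite dotvDr /sqnorm; lra.
Qed.

Lemma dual_opt_eq_resid (thhat : 'cV[R]_n) :
  (forall th, (dual_obj X y g lam th <= dual_obj X y g lam thhat)%E) ->
  thhat = resid.
Proof.
move=> thhat_opt.
have := le_trans dual_obj_resid_ge
  (le_trans (thhat_opt resid) (dual_obj_le_quadratic thhat)).
rewrite lee_fin => le_sq; apply/eqP; rewrite -subr_eq0; apply/eqP.
by apply: sqnorm_le0; lra.
Qed.

End Optimality.
End DualOfPenalizedLeastSquares.

Lemma primal_opt_fin (R : realType) (n d : nat) (X : 'M[R]_(n, d)) y g lam bhat :
  proper_fun g -> g 0 = 0%E ->
  (forall b, (primal_obj X y g lam bhat <= primal_obj X y g lam b)%E) ->
  exists G, g bhat = G%:E.
Proof.
move=> [g_nNy _] g0 /(_ 0); rewrite /primal_obj g0 adde0.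
case gb: (g bhat) => [G| |]; [by exists G | by rewrite addey |].
by move: (g_nNy bhat); rewrite gb.
Qed.

Theorem theorem8 (R : realType) (n d : nat) (X : 'M[R]_(n, d)) (y : 'cV[R]_n)
  (g : 'cV[R]_d -> \bar R)
  (g_proper : proper_fun g)
  (g_lsc : lower_semicontinuous g)
  (g_convex : convex_efun g)
  (g_homog : forall (k : R) (b : 'cV[R]_d), 0 <= k -> g (k *: b) = (k%:E * g b)%E)
  (g_relint : exists b, relint (edom g) b)
  (lam0 : R) (lam0_pos : 0 < lam0)
  (bhat : 'cV[R]_d) (thhat : 'cV[R]_n)
  (bhat_opt : forall b, (primal_obj X y g lam0 bhat <= primal_obj X y g lam0 b)%E)
  (thhat_opt : forall th, (dual_obj X y g lam0 th <= dual_obj X y g lam0 thhat)%E) :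
  R_Sasvi y lam0 thhat = R_DS X y g bhat thhat.
Proof.
have [G gbhat] := primal_opt_fin g_proper (homog_fun0 g_homog) bhat_opt.
have thhatE :=
  dual_opt_eq_resid gbhat g_convex bhat_opt g_homog g_proper thhat_opt.
have GE := opt_value_dotv gbhat g_convex bhat_opt g_homog.
rewrite -thhatE in GE.
have residE : lam0^-1 *: y - thhat = X *m bhat by rewrite thhatE opprB addrC subrK.
rewrite /R_Sasvi /R_DS residE gbhat; apply/seteqP; split=> th /= [];
  rewrite dotv_diameter subr_le0 -EFinB lee_fin subr_ge0 GE dotvBr;
  by rewrite (dotvC _ th) (dotvC _ thhat) => ? ?; split=> //; lra.
Qed.
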